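(* Let $t, u, v$ be integers with $t \ge 2$, $u \ge 2$, $v \ge 2$, and let $\lambda, \gamma$ be rationals with $\lambda < \gamma(u-v)$. Put $d = (v-1)t - v$, \[ \tau = \frac{\lambda + \gamma(v-1)t}{(v-1)t + u - v}, \qquad L(b) = \gamma - [\gamma(u-v) - \lambda]\,\frac{b\,[d(b-1)+t]}{[(d+u)(b-1)+t]\,[db+t]} \quad (b \ge 1 \text{ integer}). \] Then: (i) if $t = v = u = 2$, then $L(b) = \tau$ for all $b \ge 1$; (ii) if $u = t$ and either $t > 2$ or $v > 2$, then $L(1) = \tau$ and $L(b) > \tau$ for all $b \ge 2$; (iii) if $u < t$, then $L(b) > \tau$ for all $b \ge 1$; (iv) if $u > t$, then $L(1) = \min_{b \ge 1} L(b) < \tau$. Consequently $L(b) \ge \min\{\tau, L(1)\}$ for all $b \ge 1$. *)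

From mathcomp Require Import all_boot all_order all_algebra.
Set Implicit Arguments. Unset Strict Implicit. Unset Printing Implicit Defensive.
Import Order.TTheory GRing.Theory Num.Theory.
Local Open Scope ring_scope.

Definition dpar (t v : int) : int := (v - 1) * t - v.

Definition tau (t u v : int) (lam gam : rat) : rat :=
  (lam + gam * ((v - 1) * t)%:~R) / ((v - 1) * t + u - v)%:~R.

Definition Lfun (t u v : int) (lam gam : rat) (b : int) : rat :=
  let d := dpar t v in
  gam - (gam * (u - v)%:~R - lam) *
        ((b * (d * (b - 1) + t))%:~R /
         (((d + u) * (b - 1) + t) * (d * b + t))%:~R).

From mathcomp Require Import all_boot all_order all_algebra ring zify.
Import Order.TTheory GRing.Theory Num.Theory.
Local Open Scope ring_scope.

(* With c = gam (u - v) - lam > 0 and d = dpar t v >= 0, both differences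
   L(b) - tau and L(b) - L(1) are explicit fractions whose denominators are
   positive for b >= 1:
     L(b) - tau  = c t (d (b-1) + t - u) / ((d+u) P(b)),
     L(b) - L(1) = c (b-1) ((u-t) d b + t (d+u-t)) / ((d+t) P(b)),
   with P(b) = ((d+u)(b-1) + t)(d b + t).  Hence L(b) - tau has the sign of
   the integer d (b-1) + t - u, and for u >= t the second numerator is
   nonnegative, so L(1) is the minimum. *)

Lemma Lfun_sub_tau (t u v : int) (lam gam : rat) (b : int) :
  dpar t v + u != 0 -> (dpar t v + u) * (b - 1) + t != 0 -> dpar t v * b + t != 0 ->
  Lfun t u v lam gam b - tau t u v lam gam =
  (gam * (u - v)%:~R - lam) * ((t * (dpar t v * (b - 1) + t - u))%:~R /
     ((dpar t v + u) * (((dpar t v + u) * (b - 1) + t) * (dpar t v * b + t)))%:~R).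
Proof.
rewrite /Lfun /tau /dpar -!(intr_eq0 rat) !(intrB, intrD, intrM, rmorph1) => h1 h2 h3.
by field; rewrite h1 h2 h3.
Qed.

Lemma Lfun_sub_Lfun1 (t u v : int) (lam gam : rat) (b : int) :
  t != 0 -> dpar t v + t != 0 -> (dpar t v + u) * (b - 1) + t != 0 -> dpar t v * b + t != 0 ->
  Lfun t u v lam gam b - Lfun t u v lam gam 1 =
  (gam * (u - v)%:~R - lam) * (((b - 1) * ((u - t) * dpar t v * b + t * (dpar t v + u - t)))%:~R /
     ((dpar t v + t) * (((dpar t v + u) * (b - 1) + t) * (dpar t v * b + t)))%:~R).
Proof.
rewrite /Lfun /dpar -!(intr_eq0 rat) !(intrB, intrD, intrM, rmorph1) => h0 h1 h2 h3.
by field; rewrite h0 h1 h2 h3.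
Qed.

Lemma pmulr_divz_gt0 (R : realFieldType) (c : R) (n q : int) :
  0 < c -> 0 < q -> (0 < c * (n%:~R / q%:~R)) = (0 < n).
Proof. by move=> c0 q0; rewrite pmulr_rgt0 // pmulr_lgt0 ?ltr0z // invr_gt0 ltr0z. Qed.

Lemma pmulr_divz_ge0 (R : realFieldType) (c : R) (n q : int) :
  0 < c -> 0 < q -> (0 <= c * (n%:~R / q%:~R)) = (0 <= n).
Proof. by move=> c0 q0; rewrite pmulr_rge0 // pmulr_lge0 ?ler0z // invr_gt0 ltr0z. Qed.

Lemma dpar_ge0 {t v : int} : 2 <= t -> 2 <= v -> 0 <= dpar t v.
Proof. by rewrite /dpar; nia. Qed.

Lemma dpar_gt0 {t v : int} : 2 <= t -> 2 <= v -> 2 < t \/ 2 < v -> 0 < dpar t v.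
Proof. by rewrite /dpar; nia. Qed.

Section LfunSign.

Context {t u v : int} {lam gam : rat}.
Hypotheses (ht : 2 <= t) (hu : 2 <= u) (hv : 2 <= v) (hlam : lam < gam * (u - v)%:~R).

Local Notation d := (dpar t v).
Local Notation L := (Lfun t u v lam gam).
Local Notation tau0 := (tau t u v lam gam).

Let d_ge0 : 0 <= d. Proof. exact: dpar_ge0. Qed.
Let c_gt0 : 0 < gam * (u - v)%:~R - lam. Proof. by rewrite subr_gt0. Qed.

Let denom_gt0 (b : int) : 1 <= b -> 0 < ((d + u) * (b - 1) + t) * (d * b + t).
Proof. by move=> hb; apply: mulr_gt0; nia. Qed.

Let Lfun_sub_tau_ge1 (b : int) : 1 <= b ->
  L b - tau0 = (gam * (u - v)%:~R - lam) * ((t * (d * (b - 1) + t - u))%:~R /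
     ((d + u) * (((d + u) * (b - 1) + t) * (d * b + t)))%:~R).
Proof. by move=> hb; apply: Lfun_sub_tau; rewrite lt0r_neq0 //; nia. Qed.

Lemma tau_lt_Lfun (b : int) : 1 <= b -> (tau0 < L b) = (0 < d * (b - 1) + t - u).
Proof.
move=> hb; rewrite -subr_gt0 Lfun_sub_tau_ge1 // pmulr_divz_gt0 //.
  by rewrite pmulr_rgt0 //; lia.
by rewrite mulr_gt0 ?denom_gt0 //; lia.
Qed.

Lemma tau_le_Lfun (b : int) : 1 <= b -> (tau0 <= L b) = (0 <= d * (b - 1) + t - u).
Proof.
move=> hb; rewrite -subr_ge0 Lfun_sub_tau_ge1 // pmulr_divz_ge0 //.
  by rewrite pmulr_rge0 //; lia.
by rewrite mulr_gt0 ?denom_gt0 //; lia.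
Qed.

Lemma Lfun_eq_tau (b : int) : 1 <= b -> d * (b - 1) + t - u = 0 -> L b = tau0.
Proof.
by move=> hb hX; apply/eqP; rewrite -subr_eq0 Lfun_sub_tau_ge1 // hX mulr0 mulr0z mul0r mulr0.
Qed.

Lemma Lfun1_le_Lfun (b : int) : t <= u -> 1 <= b -> L 1 <= L b.
Proof.
move=> htu hb; rewrite -subr_ge0 Lfun_sub_Lfun1; try by rewrite lt0r_neq0 //; nia.
rewrite pmulr_divz_ge0 //; first by apply: mulr_ge0; nia.
by rewrite mulr_gt0 ?denom_gt0 //; lia.
Qed.

End LfunSign.

Theorem lemma25 (t u v : int) (lam gam : rat)
  (ht : 2 <= t) (hu : 2 <= u) (hv : 2 <= v)
  (hlam : lam < gam * (u - v)%:~R) :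
  let tau0 := tau t u v lam gam in
  let L := Lfun t u v lam gam in
  [/\ (t = 2 /\ v = 2 /\ u = 2 -> forall b : int, 1 <= b -> L b = tau0),
      (u = t -> (2 < t \/ 2 < v) ->
         L 1 = tau0 /\ forall b : int, 2 <= b -> tau0 < L b),
      (u < t -> forall b : int, 1 <= b -> tau0 < L b),
      (t < u -> (forall b : int, 1 <= b -> L 1 <= L b) /\ L 1 < tau0)
    & forall b : int, 1 <= b -> Num.min tau0 (L 1) <= L b].
Proof.
move=> tau0 L; have d_ge0 := dpar_ge0 ht hv.
split.
- by case=> t2 [v2 u2] b hb; apply: Lfun_eq_tau => //; rewrite t2 v2 u2 /dpar; lia.
- move=> hut /(dpar_gt0 ht hv) d_gt0; split; first by apply: Lfun_eq_tau => //; lia.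
  by move=> b hb; rewrite tau_lt_Lfun //; [nia | lia].
- by move=> hut b hb; rewrite tau_lt_Lfun //; nia.
- move=> htu; split=> [b hb|]; first by apply: Lfun1_le_Lfun => //; lia.
  by rewrite ltNge tau_le_Lfun //; lia.
move=> b hb; rewrite ge_min; case: (lerP u t) => [hut | htu].
  by rewrite tau_le_Lfun //; nia.
by rewrite Lfun1_le_Lfun ?orbT //; lia.
Qed.
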